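(* Let $X=[0,1]$ with the usual metric, $U=\{0,1\}$, and let $F_0,F_1:[0,1]\to[0,1]$ be given by $F_0(x)=\frac18$ for $0\le x<\frac14$, $F_0(x)=2x-\frac38$ for $\frac14\le x<\frac38$, $F_0(x)=(x-\frac38)^2+\frac38$ for $\frac38\le x\le1$; and $F_1(x)=0$ for $0\le x<\frac1{16}$, $F_1(x)=2x-\frac18$ for $\frac1{16}\le x<\frac18$, $F_1(x)=\frac14(x-\frac18)^{1/3}+\frac18$ for $\frac18\le x<\frac14$, $F_1(x)=-x+\frac12$ for $\frac14\le x<\frac12$, $F_1(x)=0$ for $\frac12\le x\le1$. Consider the control system $x_{n+1}=F_{u_n}(x_n)$ and let $Q=[\frac14,\frac12]$. Then $Q$ is finitely mean equi-invariant but not mean equi-invariant (the point $\frac38$ is not a mean equi-invariant point of $Q$).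
   Context: For $\omega=(\omega_0,\omega_1,\dots)\in\mathscr U=U^{\mathbb N_0}$ and $x\in X$: $\phi(0,x,\omega)=x$, $\phi(k,x,\omega)=F_{\omega_{k-1}}\circ\cdots\circ F_{\omega_0}(x)$. $d(y,Q)=\inf_{q\in Q}|y-q|$, $B(x,\delta)$ open ball. A point $x\in Q$ is a finitely mean equi-invariant point of $Q$ if for every $\varepsilon>0$ there exist $\delta>0$ and a finite set $F\subset\mathscr U$ such that for every $y\in B(x,\delta)\cap Q$ there is $\omega\in F$ with $\limsup_{n\to\infty}\frac1n\sum_{i=0}^{n-1}d(\phi(i,y,\omega),Q)<\varepsilon$; it is a mean equi-invariant point if this holds with $F$ a singleton. $Q$ is (finitely) mean equi-invariant if all its points are (finitely) mean equi-invariant points. *)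

From Stdlib Require Import Reals Lra List.
From Coquelicot Require Import Coquelicot.
Open Scope R_scope.

Fixpoint phi {U : Type} (F : U -> R -> R) (k : nat) (x : R) (omega : nat -> U) : R :=
  match k with
  | O => x
  | S k' => F (omega k') (phi F k' x omega)
  end.

Definition dist_set (Q : R -> Prop) (y : R) : R :=
  real (Glb_Rbar (fun r => exists q, Q q /\ r = Rabs (y - q))).

(* (1/n) sum_{i=0}^{n-1} d(phi(i,y,omega),Q), for n >= 1 (value 0 at n = 0,
   irrelevant for the limsup). *)
Definition mean_dist {U : Type} (F : U -> R -> R) (Q : R -> Prop)
  (y : R) (omega : nat -> U) (n : nat) : R :=
  match n with
  | O => 0
  | S m => / INR (S m) * sum_f_R0 (fun i => dist_set Q (phi F i y omega)) m
  end.

Definition mean_close {U : Type} (F : U -> R -> R) (Q : R -> Prop)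
  (y : R) (omega : nat -> U) (eps : R) : Prop :=
  Rbar_lt (LimSup_seq (mean_dist F Q y omega)) (Finite eps).

Definition in_ball_Q (X Q : R -> Prop) (x delta y : R) : Prop :=
  X y /\ Rabs (y - x) < delta /\ Q y.

Definition finitely_mean_equi_invariant_point {U : Type} (X : R -> Prop)
  (F : U -> R -> R) (Q : R -> Prop) (x : R) : Prop :=
  Q x /\
  forall eps, eps > 0 ->
    exists delta, delta > 0 /\
    exists Fs : list (nat -> U),
      forall y, in_ball_Q X Q x delta y ->
        exists omega, In omega Fs /\ mean_close F Q y omega eps.

Definition mean_equi_invariant_point {U : Type} (X : R -> Prop)
  (F : U -> R -> R) (Q : R -> Prop) (x : R) : Prop :=
  Q x /\
  forall eps, eps > 0 ->
    exists delta, delta > 0 /\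
    exists omega : nat -> U,
      forall y, in_ball_Q X Q x delta y -> mean_close F Q y omega eps.

Definition finitely_mean_equi_invariant {U : Type} (X : R -> Prop)
  (F : U -> R -> R) (Q : R -> Prop) : Prop :=
  forall x, Q x -> finitely_mean_equi_invariant_point X F Q x.

Definition mean_equi_invariant {U : Type} (X : R -> Prop)
  (F : U -> R -> R) (Q : R -> Prop) : Prop :=
  forall x, Q x -> mean_equi_invariant_point X F Q x.

Definition X01 (x : R) : Prop := 0 <= x <= 1.

(* real cube root on [0, +oo) (Rpower 0 _ = 1 in Stdlib, so treat 0 apart) *)
Definition cbrt (x : R) : R := if Rle_dec x 0 then 0 else Rpower x (1/3).

Definition F0 (x : R) : R :=
  if Rlt_dec x (1/4) then 1/8
  else if Rlt_dec x (3/8) then 2 * x - 3/8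
  else (x - 3/8) ^ 2 + 3/8.

Definition F1 (x : R) : R :=
  if Rlt_dec x (1/16) then 0
  else if Rlt_dec x (1/8) then 2 * x - 1/8
  else if Rlt_dec x (1/4) then 1/4 * cbrt (x - 1/8) + 1/8
  else if Rlt_dec x (1/2) then - x + 1/2
  else 0.

(* U = {0,1} encoded as bool: false = 0, true = 1 *)
Definition Fex (u : bool) : R -> R := if u then F1 else F0.

Definition Qex (x : R) : Prop := 1/4 <= x <= 1/2.

(* For the example:
   - on [3/8,1/2] the map F0 keeps points in Q, and on [1/4,3/8) the map F1
     sends y to 1/2 - y in (1/8,1/4] and then contracts geometrically towards
     the fixed point 1/4; so the two constant controls form a finite set of
     controls that works at every point of Q, with any delta;
   - near 3/8 no single control works: once the control 1 is used, the orbit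
     of 3/8 falls into the invariant band [0,1/8] at distance >= 1/8 from Q;
     if the control is constantly 0, the points 3/8 - s are pushed away from
     3/8 by the doubling branch of F0 and get stuck at the fixed point 1/8. *)

From Stdlib Require Import Reals Lra Lia Classical.
From Coquelicot Require Import Coquelicot.
Open Scope R_scope.

Lemma dist_set_bounds (Q : R -> Prop) (y q0 m : R) :
  Q q0 -> (forall q, Q q -> m <= Rabs (y - q)) ->
  m <= dist_set Q y /\ dist_set Q y <= Rabs (y - q0).
Proof.
  intros Hq0 Hm. unfold dist_set.
  set (D := fun r => exists q, Q q /\ r = Rabs (y - q)).
  destruct (Glb_Rbar_correct D) as [Hlb Hglb].
  assert (Hup : Rbar_le (Glb_Rbar D) (Rabs (y - q0))) by (apply Hlb; exists q0; auto).
  assert (Hlow : Rbar_le m (Glb_Rbar D)).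
  { apply Hglb. intros r [q [Hq ->]]. apply Hm; exact Hq. }
  destruct (Glb_Rbar D); simpl in *; try contradiction; lra.
Qed.

Lemma dist_set_le (Q : R -> Prop) (y q : R) : Q q -> dist_set Q y <= Rabs (y - q).
Proof.
  intros Hq. apply (dist_set_bounds Q y q 0 Hq). intros; apply Rabs_pos.
Qed.

Lemma dist_set_ge (Q : R -> Prop) (y q m : R) :
  Q q -> (forall q', Q q' -> m <= Rabs (y - q')) -> m <= dist_set Q y.
Proof. intros Hq Hm. apply (dist_set_bounds Q y q m Hq Hm). Qed.

Lemma dist_set_nonneg (Q : R -> Prop) (y q : R) : Q q -> 0 <= dist_set Q y.
Proof. intros Hq. apply (dist_set_ge Q y q); auto. intros; apply Rabs_pos. Qed.

Lemma dist_set_in (Q : R -> Prop) (y : R) : Q y -> dist_set Q y = 0.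
Proof.
  intros Hy. pose proof (dist_set_le Q y y Hy). pose proof (dist_set_nonneg Q y y Hy).
  rewrite Rminus_diag, Rabs_R0 in *. lra.
Qed.

(** * Cesaro means *)

Definition cesaro_mean (d : nat -> R) (n : nat) : R :=
  match n with
  | O => 0
  | S m => / INR (S m) * sum_f_R0 d m
  end.

Lemma mean_close_cesaro {U : Type} (F : U -> R -> R) (Q : R -> Prop)
  (y : R) (omega : nat -> U) (eps : R) :
  mean_close F Q y omega eps <->
  Rbar_lt (LimSup_seq (cesaro_mean (fun i => dist_set Q (phi F i y omega)))) eps.
Proof. reflexivity. Qed.

Lemma cesaro_limsup_bounded_sums (d : nat -> R) (K eps : R) :
  0 <= K -> 0 < eps -> (forall m, sum_f_R0 d m <= K) ->
  Rbar_lt (LimSup_seq (cesaro_mean d)) eps.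
Proof.
  intros HK He Hs.
  destruct (archimed_cor1 (eps / 2 / (K + 1))) as [N [HN HN0]].
  { apply Rdiv_lt_0_compat; lra. }
  apply Rbar_le_lt_trans with (LimSup_seq (fun _ => eps / 2)).
  2: { rewrite LimSup_seq_const. simpl. lra. }
  apply LimSup_le. exists N. intros [|m] Hm; [lia|]. unfold cesaro_mean.
  assert (HNpos : 0 < INR N) by (apply lt_0_INR; lia).
  assert (HNm : INR N <= INR (S m)) by (apply le_INR; lia).
  assert (Hinv : / INR (S m) <= / INR N) by (apply Rinv_le_contravar; lra).
  assert (0 < / INR (S m)) by (apply Rinv_0_lt_compat; lra).
  assert (Hmean : / INR (S m) * sum_f_R0 d m <= / INR N * (K + 1)).
  { apply Rle_trans with (/ INR (S m) * (K + 1)).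
    - apply Rmult_le_compat_l; [lra|]. specialize (Hs m); lra.
    - apply Rmult_le_compat_r; lra. }
  apply Rmult_lt_compat_r with (r := K + 1) in HN; [|lra].
  replace (eps / 2 / (K + 1) * (K + 1)) with (eps / 2) in HN by (field; lra).
  lra.
Qed.

Lemma sum_geometric_bound (d : nat -> R) (C r : R) :
  0 <= r < 1 -> (forall i, d i <= C * r ^ i) ->
  forall m, sum_f_R0 d m <= C / (1 - r) - C * r ^ S m / (1 - r).
Proof.
  intros Hr Hd. induction m as [|m IH]; simpl.
  - specialize (Hd 0%nat). simpl in Hd.
    replace (C / (1 - r) - C * (r * 1) / (1 - r)) with C by (field; lra). lra.
  - specialize (Hd (S m)). simpl in Hd, IH.
    replace (C / (1 - r) - C * (r * (r * r ^ m)) / (1 - r)) with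
      ((C / (1 - r) - C * (r * r ^ m) / (1 - r)) + C * (r * r ^ m)) by (field; lra).
    lra.
Qed.

Lemma cesaro_limsup_geometric (d : nat -> R) (C r eps : R) :
  0 <= r < 1 -> 0 <= C -> 0 < eps -> (forall i, d i <= C * r ^ i) ->
  Rbar_lt (LimSup_seq (cesaro_mean d)) eps.
Proof.
  intros Hr HC He Hd.
  apply cesaro_limsup_bounded_sums with (K := C / (1 - r)); auto.
  - apply Rmult_le_pos; [lra|]. left; apply Rinv_0_lt_compat; lra.
  - intros m. eapply Rle_trans; [apply (sum_geometric_bound d C r Hr Hd)|].
    assert (0 <= C * r ^ S m / (1 - r)); [|lra].
    apply Rmult_le_pos; [apply Rmult_le_pos; [lra|apply pow_le; lra]|].
    left; apply Rinv_0_lt_compat; lra.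
Qed.

Lemma cesaro_partial_sum_lower (d : nat -> R) (c : R) (n : nat) :
  0 < c -> (forall i, 0 <= d i) -> (forall i, (n <= i)%nat -> c <= d i) ->
  forall m, c * (INR m + 1 - INR n) <= sum_f_R0 d m.
Proof.
  intros Hc H0 Hc_tail. induction m as [|m IH]; simpl sum_f_R0.
  - destruct n as [|n].
    + specialize (Hc_tail 0%nat (le_n _)). simpl. lra.
    + rewrite S_INR. pose proof (pos_INR n). specialize (H0 0%nat). simpl. nra.
  - rewrite S_INR. destruct (Compare_dec.le_lt_dec n (S m)) as [Hle|Hlt].
    + specialize (Hc_tail (S m) Hle). lra.
    + assert (Hnm : INR (S (S m)) <= INR n) by (apply le_INR; lia).
      rewrite !S_INR in Hnm.
      assert (0 <= sum_f_R0 d m) by (apply cond_pos_sum; exact H0).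
      specialize (H0 (S m)). nra.
Qed.

Lemma cesaro_limsup_ge (d : nat -> R) (c : R) (n : nat) :
  0 < c -> (forall i, 0 <= d i) -> (forall i, (n <= i)%nat -> c <= d i) ->
  ~ Rbar_lt (LimSup_seq (cesaro_mean d)) c.
Proof.
  intros Hc H0 Hc_tail.
  pose proof (cesaro_partial_sum_lower d c n Hc H0 Hc_tail) as Hsum.
  assert (Hev : forall e, 0 < e -> Rbar_le (c - e) (LimSup_seq (cesaro_mean d))).
  { intros e He. pose proof (pos_INR n).
    destruct (archimed_cor1 (e / (c * (INR n + 1)))) as [N [HN HN0]].
    { apply Rdiv_lt_0_compat; [lra|]. apply Rmult_lt_0_compat; lra. }
    rewrite <- (LimSup_seq_const (c - e)).
    apply LimSup_le. exists N. intros [|m] Hm; [lia|]. unfold cesaro_mean.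
    specialize (Hsum m).
    assert (HNpos : 0 < INR N) by (apply lt_0_INR; lia).
    assert (HNm : INR N <= INR (S m)) by (apply le_INR; lia).
    rewrite S_INR in *.
    assert (Hinv : / (INR m + 1) <= / INR N) by (apply Rinv_le_contravar; lra).
    assert (Hratio : c * (INR n + 1) / (INR m + 1) <= e).
    { apply Rle_trans with (c * (INR n + 1) * / INR N).
      - unfold Rdiv; apply Rmult_le_compat_l; [nra|lra].
      - apply Rmult_lt_compat_l with (r := c * (INR n + 1)) in HN; [|nra].
        replace (c * (INR n + 1) * (e / (c * (INR n + 1)))) with e in HN
          by (field; nra). lra. }
    apply Rle_trans with (/ (INR m + 1) * (c * (INR m + 1 - INR n))).
    - replace (/ (INR m + 1) * (c * (INR m + 1 - INR n)))
        with (c - c * (INR n + 1) / (INR m + 1) + c / (INR m + 1)) by (field; lra).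
      assert (0 < c / (INR m + 1)) by (apply Rdiv_lt_0_compat; lra). lra.
    - apply Rmult_le_compat_l; [left; apply Rinv_0_lt_compat; lra | exact Hsum]. }
  intro Hlt. destruct (LimSup_seq (cesaro_mean d)) as [l| |]; simpl in Hlt; try contradiction.
  - specialize (Hev ((c - l) / 2) ltac:(lra)). simpl in Hev. lra.
  - exact (Hev 1 ltac:(lra)).
Qed.

Lemma orbit_stays {U : Type} (F : U -> R -> R) (A : R -> Prop)
  (y : R) (omega : nat -> U) (n : nat) :
  (forall k x, (n <= k)%nat -> A x -> A (F (omega k) x)) ->
  A (phi F n y omega) -> forall i, (n <= i)%nat -> A (phi F i y omega).
Proof.
  intros Hinv Hn i Hi. induction Hi as [|i Hi IH]; [exact Hn|].
  simpl. apply Hinv; assumption.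
Qed.

(** * The example *)

Lemma cbrt_spec (t : R) : 0 < t -> 0 < cbrt t /\ cbrt t ^ 3 = t.
Proof.
  intros Ht. unfold cbrt. destruct (Rle_dec t 0); [lra|]. split.
  - apply exp_pos.
  - rewrite <- Rpower_pow by apply exp_pos.
    rewrite Rpower_mult. replace (1 / 3 * INR 3) with 1 by (simpl; field).
    apply Rpower_1; exact Ht.
Qed.

Lemma cbrt_0 : cbrt 0 = 0.
Proof. unfold cbrt. destruct (Rle_dec 0 0); lra. Qed.

Ltac piecewise := unfold F0, F1; repeat destruct Rlt_dec; try lra.

Lemma low_band_invariant (u : bool) (x : R) : 0 <= x <= 1/8 -> 0 <= Fex u x <= 1/8.
Proof.
  intros Hx. destruct u; simpl; [|piecewise].
  unfold F1. repeat destruct Rlt_dec; try lra.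
  replace (x - 1/8) with 0 by lra. rewrite cbrt_0. lra.
Qed.

Lemma low_band_far (x : R) : 0 <= x <= 1/8 -> 1/8 <= dist_set Qex x.
Proof.
  intros Hx. apply dist_set_ge with (q := 1/4); [unfold Qex; lra|].
  intros q Hq. unfold Qex in Hq. unfold Rabs; destruct Rcase_abs; lra.
Qed.

Lemma F0_right_half (x : R) : 3/8 <= x <= 1/2 -> 3/8 <= F0 x <= 1/2.
Proof. intros. piecewise; nra. Qed.

Lemma F1_to_low_band (x : R) :
  0 <= x <= 1/8 \/ 3/8 <= x <= 1/2 -> 0 <= F1 x <= 1/8.
Proof.
  intros [Hx|Hx]; [apply (low_band_invariant true x Hx)|piecewise].
Qed.

Lemma low_band_or_right_half_invariant (u : bool) (x : R) :
  0 <= x <= 1/8 \/ 3/8 <= x <= 1/2 ->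
  0 <= Fex u x <= 1/8 \/ 3/8 <= Fex u x <= 1/2.
Proof.
  intros Hx. destruct u; simpl; [left; apply F1_to_low_band, Hx|].
  destruct Hx as [Hx|Hx].
  - left. apply (low_band_invariant false x Hx).
  - right. apply F0_right_half, Hx.
Qed.

Lemma F1_contraction (x1 x : R) : 1/8 < x1 <= 1/4 -> x1 <= x <= 1/4 ->
  x <= F1 x <= 1/4 /\ 1/4 - F1 x <= (1/4 - x) * / (8 * x1).
Proof.
  intros Hx1 Hx.
  destruct (Req_dec x (1/4)) as [->|Hne].
  { replace (F1 (1/4)) with (1/4) by piecewise.
    split; [lra|]. replace (1/4 - 1/4) with 0 by lra. rewrite Rmult_0_l. lra. }
  replace (F1 x) with (1/4 * cbrt (x - 1/8) + 1/8) by piecewise.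
  destruct (cbrt_spec (x - 1/8)) as [Hc Hc3]; [lra|].
  set (b := 2 * cbrt (x - 1/8)).
  assert (Hb3 : b ^ 3 = 8 * x - 1).
  { unfold b. transitivity (8 * cbrt (x - 1/8) ^ 3); [ring | rewrite Hc3; field]. }
  assert (Hb0 : 0 < b) by (unfold b; lra).
  assert (Hb1 : b < 1).
  { destruct (Rlt_le_dec b 1); auto. assert (1 <= b ^ 3) by (simpl; nra). lra. }
  assert (Hcube_le : 8 * x - 1 <= b) by (rewrite <- Hb3; simpl; nra).
  replace (1/4 * cbrt (x - 1/8) + 1/8) with (b / 8 + 1/8) by (unfold b; field).
  split; [lra|].
  apply Rmult_le_reg_r with (8 * x1); [lra|].
  rewrite Rmult_assoc, Rinv_l, Rmult_1_r by lra.
  assert (Hfactor : 1 - (8 * x - 1) = (1 - b) * (1 + b + b * b))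
    by (rewrite <- Hb3; simpl; ring).
  assert (0 <= (1 - b) * (b + b * b - (8 * x1 - 1))) by (apply Rmult_le_pos; nra).
  nra.
Qed.

Lemma right_half_mean_close (y eps : R) : 3/8 <= y <= 1/2 -> 0 < eps ->
  mean_close Fex Qex y (fun _ => false) eps.
Proof.
  intros Hy He. apply mean_close_cesaro.
  apply cesaro_limsup_geometric with (C := 0) (r := 0); try lra.
  assert (Hin : forall i, 3/8 <= phi Fex i y (fun _ => false) <= 1/2).
  { intro i. apply (orbit_stays _ (fun x => 3/8 <= x <= 1/2) _ _ 0); [|simpl; lra|lia].
    intros k x _ Hx. apply F0_right_half, Hx. }
  intro i. rewrite dist_set_in by (unfold Qex; specialize (Hin i); lra). lra.
Qed.

(* Points of [1/4,3/8) converge geometrically to 1/4 under the constant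
   control 1: F1 y = 1/2 - y =: x1 > 1/8, and then F1_contraction applies. *)
Lemma left_half_orbit (y : R) : 1/4 <= y < 3/8 ->
  forall k, 1/2 - y <= phi Fex (S k) y (fun _ => true) <= 1/4 /\
            1/4 - phi Fex (S k) y (fun _ => true) <= 1/8 * (/ (8 * (1/2 - y))) ^ k.
Proof.
  intros Hy. set (x1 := 1/2 - y). set (r := / (8 * x1)).
  assert (Hx1 : 1/8 < x1 <= 1/4) by (unfold x1; lra).
  assert (Hr : 0 < r) by (unfold r; apply Rinv_0_lt_compat; lra).
  induction k as [|k [Hlow Hgap]].
  - simpl. replace (F1 y) with x1 by (unfold x1; piecewise). lra.
  - change (phi Fex (S (S k)) y (fun _ => true))
      with (F1 (phi Fex (S k) y (fun _ => true))).
    destruct (F1_contraction x1 _ Hx1 Hlow) as [Hstep Hcontr].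
    split; [lra|]. fold r in Hcontr. change (r ^ S k) with (r * r ^ k).
    eapply Rle_trans; [exact Hcontr|].
    apply Rle_trans with (1/8 * r ^ k * r); [apply Rmult_le_compat_r; lra|lra].
Qed.

Lemma left_half_mean_close (y eps : R) : 1/4 <= y < 3/8 -> 0 < eps ->
  mean_close Fex Qex y (fun _ => true) eps.
Proof.
  intros Hy He. set (r := / (8 * (1/2 - y))).
  assert (Hr : 0 <= r < 1).
  { unfold r. split; [left; apply Rinv_0_lt_compat; lra|].
    apply Rmult_lt_reg_r with (8 * (1/2 - y)); [lra|]. rewrite Rinv_l by lra. lra. }
  assert (Hscale : (1/2 - y) * r = 1/8) by (unfold r; field; lra).
  apply mean_close_cesaro, cesaro_limsup_geometric with (C := 1/2 - y) (r := r); try lra.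
  intros [|k].
  - simpl. rewrite dist_set_in by (unfold Qex; lra). lra.
  - destruct (left_half_orbit y Hy k) as [Hlow Hgap]. fold r in Hgap.
    eapply Rle_trans; [apply dist_set_le with (q := 1/4); unfold Qex; lra|].
    rewrite Rabs_left1 by lra.
    replace ((1/2 - y) * r ^ S k) with (1/8 * r ^ k) by (rewrite <- Hscale; simpl; ring).
    lra.
Qed.

Lemma Q_finitely_mean_equi_invariant : finitely_mean_equi_invariant X01 Fex Qex.
Proof.
  intros x Hx. split; [exact Hx|]. intros eps He. exists 1. split; [lra|].
  exists (cons (fun _ => false) (cons (fun _ => true) nil)).
  intros y [_ [_ Hy]]. unfold Qex in Hy.
  destruct (Rle_lt_dec (3/8) y).
  - exists (fun _ => false). split; [simpl; auto|]. apply right_half_mean_close; lra.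
  - exists (fun _ => true). split; [simpl; auto|]. apply left_half_mean_close; lra.
Qed.

(* Once the control 1 is used, the orbit of 3/8 enters the low band for good. *)
Lemma control_one_fails (omega : nat -> bool) (n : nat) : omega n = true ->
  ~ mean_close Fex Qex (3/8) omega (1/8).
Proof.
  intros Hn. rewrite mean_close_cesaro. apply (cesaro_limsup_ge _ _ (S n)); [lra| |].
  - intro i. apply dist_set_nonneg with (q := 1/4). unfold Qex; lra.
  - assert (Hbefore : 0 <= phi Fex n (3/8) omega <= 1/8 \/
                      3/8 <= phi Fex n (3/8) omega <= 1/2).
    { apply (orbit_stays _ (fun x => 0 <= x <= 1/8 \/ 3/8 <= x <= 1/2) _ _ 0);
        [|simpl; lra|lia].
      intros k x _ Hx. apply low_band_or_right_half_invariant, Hx. }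
    intros i Hi. apply low_band_far.
    apply (orbit_stays _ (fun x => 0 <= x <= 1/8) _ _ (S n)); auto.
    + intros k x _ Hx. apply low_band_invariant, Hx.
    + simpl. rewrite Hn. apply F1_to_low_band, Hbefore.
Qed.

(* Under the control 0, the doubling branch of F0 pushes 3/8 - s out of
   [1/4,3/8) and onto the fixed point 1/8 of F0. *)
Lemma control_zero_orbit (omega : nat -> bool) (s : R) :
  (forall n, omega n = false) -> 0 < s <= 1/16 ->
  exists N, forall i, (N <= i)%nat -> phi Fex i (3/8 - s) omega = 1/8.
Proof.
  intros Hzero Hs. set (y := 3/8 - s).
  assert (Hinv : forall k, phi Fex k y omega = 1/8 \/
            (1/8 <= phi Fex k y omega < 3/8 /\
             s <= (1/2) ^ k * (3/8 - phi Fex k y omega))).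
  { induction k as [|k [Hfix|[Hband Hgap]]].
    - right. simpl. unfold y. lra.
    - left. simpl. rewrite Hfix, Hzero. simpl. piecewise.
    - simpl phi. rewrite Hzero. simpl Fex.
      destruct (Rlt_le_dec (phi Fex k y omega) (1/4)).
      + left. piecewise.
      + right. replace (F0 (phi Fex k y omega)) with (2 * phi Fex k y omega - 3/8)
          by piecewise.
        split; [lra|]. simpl. lra. }
  destruct (pow_lt_1_zero (1/2) ltac:(rewrite Rabs_pos_eq; lra) (4 * s) ltac:(lra))
    as [N HN].
  specialize (HN N (le_n _)). rewrite Rabs_pos_eq in HN by (apply pow_le; lra).
  exists N. apply (orbit_stays _ (fun x => x = 1/8)).
  - intros k x _ ->. rewrite Hzero. simpl. piecewise.
  - destruct (Hinv N) as [Hfix|[Hband Hgap]]; [exact Hfix|].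
    assert ((1/2) ^ N * (3/8 - phi Fex N y omega) <= (1/2) ^ N * (1/4))
      by (apply Rmult_le_compat_l; [apply pow_le|]; lra).
    lra.
Qed.

Lemma control_zero_fails (omega : nat -> bool) (s : R) :
  (forall n, omega n = false) -> 0 < s <= 1/16 ->
  ~ mean_close Fex Qex (3/8 - s) omega (1/8).
Proof.
  intros Hzero Hs. destruct (control_zero_orbit omega s Hzero Hs) as [N HN].
  rewrite mean_close_cesaro. apply (cesaro_limsup_ge _ _ N); [lra| |].
  - intro i. apply dist_set_nonneg with (q := 1/4). unfold Qex; lra.
  - intros i Hi. rewrite (HN i Hi). apply low_band_far; lra.
Qed.

Lemma three_eighths_not_mean_equi_invariant_point :
  ~ mean_equi_invariant_point X01 Fex Qex (3/8).
Proof.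
  intros [_ H]. destruct (H (1/8)) as [delta [Hdelta [omega Homega]]]; [lra|].
  destruct (classic (exists n, omega n = true)) as [[n Hn]|Hnone].
  - apply (control_one_fails omega n Hn), Homega.
    unfold in_ball_Q, X01, Qex. rewrite Rminus_diag, Rabs_R0. lra.
  - assert (Hzero : forall n, omega n = false).
    { intro n. destruct (omega n) eqn:E; auto. exfalso; eauto. }
    set (s := Rmin delta (1/8) / 2).
    assert (Hs : 0 < s <= 1/16 /\ s < delta).
    { unfold s. pose proof (Rmin_l delta (1/8)). pose proof (Rmin_r delta (1/8)).
      assert (0 < Rmin delta (1/8)) by (apply Rmin_glb_lt; lra). lra. }
    apply (control_zero_fails omega s Hzero ltac:(lra)), Homega.
    unfold in_ball_Q, X01, Qex.
    replace (3/8 - s - 3/8) with (- s) by lra. rewrite Rabs_Ropp, Rabs_pos_eq; lra.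
Qed.

Theorem mainTheorem17 :
  finitely_mean_equi_invariant X01 Fex Qex /\
  ~ mean_equi_invariant X01 Fex Qex /\
  ~ mean_equi_invariant_point X01 Fex Qex (3/8).
Proof.
  split; [exact Q_finitely_mean_equi_invariant|].
  split; [|exact three_eighths_not_mean_equi_invariant_point].
  intro Hinv. apply three_eighths_not_mean_equi_invariant_point.
  apply Hinv. unfold Qex; lra.
Qed.
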